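(* Let $\alpha\neq0$ and $b<0$, consider the system $\dot x=u\alpha x$, $\dot y=by+ux$ on $G$, and let $\mathcal C=\bigcup_{u\in B}r_u$. Then: 1. If $b\notin\alpha\Omega=\{\alpha u:u\in\Omega\}$, then $\mathcal C=\{(x,y)\in G: m_{u_*}x\le y\le m_{u^*}x\}$. 2. If $b\in\alpha\Omega$, then $\mathcal C=\{(x,y)\in G: y\le m_{u^*}x\}$ when $\alpha>0$, and $\mathcal C=\{(x,y)\in G: y\ge m_{u_*}x\}$ when $\alpha<0$. 3. For any $u_1,u_2$ in the interior (in $\mathbb{R}$) of $B$ with $u_1\neq u_2$, there exist $t_0>0$ and $u\in\Omega$ such that $\varphi(t_0,r_{u_1},u)=r_{u_2}$. 4. $\mathcal C$ is positively invariant: $\varphi(t,p,u)\in\mathcal C$ for all $p\in\mathcal C$, $t\ge0$ and $u\in\mathcal U$.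
   Context: Let $G=\{(x,y)\in\mathbb{R}^2:x>0\}$. Fix $\Omega=[u_*,u^*]$ with $u_*<0<u^*$, and fix constants $\alpha\neq0$, $b<0$. The admissible controls $\mathcal U$ are the piecewise constant functions $\mathbb{R}\to\Omega$. Consider the system $\dot x=u\alpha x$, $\dot y=by+ux$ on $G$, with solutions $\varphi(t,p,u)$. For $u\in\mathbb{R}$ with $u\alpha\neq b$, set $m_u=\frac{u}{u\alpha-b}$ and define the ray $r_u=\{(x,y)\in G: y=m_ux\}$. Let $B=\{u\in\Omega: u\alpha-b>0\}$; this set is nonempty since $0\in B$. *)

From Stdlib Require Import Reals Lra List.
Open Scope R_scope.

Definition inG (x y : R) : Prop := 0 < x.

Definition m_ (alpha b u : R) : R := u / (u * alpha - b).

Definition ray (alpha b u x y : R) : Prop := inG x y /\ y = m_ alpha b u * x.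

Definition inOmega (uL uU u : R) : Prop := uL <= u <= uU.

Definition inB (uL uU alpha b u : R) : Prop := inOmega uL uU u /\ u * alpha - b > 0.

Definition inIntB (uL uU alpha b u : R) : Prop :=
  exists eps, eps > 0 /\ forall v, Rabs (v - u) < eps -> inB uL uU alpha b v.

Definition Cset (uL uU alpha b x y : R) : Prop :=
  exists u, inB uL uU alpha b u /\ ray alpha b u x y.

(* Admissible controls: piecewise constant functions R -> Omega, i.e. on every
   bounded interval [a,c] there are finitely many points outside of which u is
   constant on each remaining connected piece. *)
Definition piecewise_const (u : R -> R) : Prop :=
  forall a c, a < c -> exists pts : list R,
    forall s1 s2, a <= s1 -> s1 <= s2 -> s2 <= c ->
      (forall p, In p pts -> ~ (s1 <= p <= s2)) -> u s1 = u s2.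

Definition admissible (uL uU : R) (u : R -> R) : Prop :=
  (forall t, inOmega uL uU (u t)) /\ piecewise_const u.

(* (X, Y) is a solution of xdot = u alpha x, ydot = b y + u x for the control u:
   continuous everywhere, and satisfying the ODE at every time around which u
   is locally constant (i.e. everywhere except at the switching times). *)
Definition is_solution (alpha b : R) (u : R -> R) (X Y : R -> R) : Prop :=
  (forall t, continuity_pt X t /\ continuity_pt Y t) /\
  (forall t, (exists d, d > 0 /\ forall s, Rabs (s - t) < d -> u s = u t) ->
     derivable_pt_lim X t (u t * alpha * X t) /\
     derivable_pt_lim Y t (b * Y t + u t * X t)).

(* For [w] in B put [m = m_w].  Along any trajectory, [(y - m x) exp (-b t)] has derivative
   [x (u - w) (1 - m alpha) exp (-b t)], and [x] stays positive because [x^2 exp (2 M t)] is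
   nondecreasing; with [w = u_*] and [w = u^*] this keeps a trajectory on the correct side of
   the extreme rays, i.e. in C.  Since [u |-> m_u] is increasing on B and [m_u] takes every slope
   [c] with [1 - c alpha > 0], C is the sector between the rays of those endpoints of Omega that
   lie in B; an endpoint leaves B exactly when [b] is in [alpha Omega].  Under a constant control
   [v], [y - m_v x] decays like [exp (b t)] while [x] grows like [exp (v alpha t)], so the slope
   [y/x] approaches [m_v] geometrically; choosing [v] just beyond [u_2], away from [u_1], moves
   [r_(u_1)] onto [r_(u_2)] in finite time. *)

From Stdlib Require Import Reals Lra List.
Open Scope R_scope.

Lemma derivable_pt_lim_rew f s d d' :
  derivable_pt_lim f s d -> d = d' -> derivable_pt_lim f s d'.
Proof. intros H ->; exact H. Qed.

Lemma derivable_pt_lim_exp_scal k s :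
  derivable_pt_lim (fun t => exp (k * t)) s (k * exp (k * s)).
Proof.
  assert (Hlin : derivable_pt_lim (fun t => k * t) s k).
  { apply (derivable_pt_lim_rew (mult_real_fct k id) s (k * 1)); [|ring].
    exact (derivable_pt_lim_scal id k s 1 (derivable_pt_lim_id s)). }
  apply (derivable_pt_lim_rew (comp exp (fun t => k * t)) s (exp (k * s) * k)); [|ring].
  exact (derivable_pt_lim_comp _ exp s k _ Hlin (derivable_pt_lim_exp (k * s))).
Qed.

Lemma continuity_pt_exp_scal k s : continuity_pt (fun t => exp (k * t)) s.
Proof. exact (derivable_continuous_pt _ s (exist _ _ (derivable_pt_lim_exp_scal k s))). Qed.

Lemma derivable_pt_lim_mult_exp f k s d :
  derivable_pt_lim f s d ->
  derivable_pt_lim (fun t => f t * exp (k * t)) s ((d + k * f s) * exp (k * s)).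
Proof.
  intro Hf.
  apply (derivable_pt_lim_rew _ s (d * exp (k * s) + f s * (k * exp (k * s)))); [|ring].
  exact (derivable_pt_lim_mult f _ s _ _ Hf (derivable_pt_lim_exp_scal k s)).
Qed.

Lemma derivable_pt_lim_sub_scal f g c s df dg :
  derivable_pt_lim f s df -> derivable_pt_lim g s dg ->
  derivable_pt_lim (fun t => f t - c * g t) s (df - c * dg).
Proof.
  intros Hf Hg.
  exact (derivable_pt_lim_minus f (mult_real_fct c g) s _ _ Hf (derivable_pt_lim_scal g c s dg Hg)).
Qed.

Lemma nondecreasing_of_derive_nonneg (h dh : R -> R) a c : a <= c ->
  (forall s, a <= s <= c -> continuity_pt h s) ->
  (forall s, a < s < c -> derivable_pt_lim h s (dh s) /\ 0 <= dh s) ->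
  h a <= h c.
Proof.
  intros Hac Hcont Hder.
  destruct (Req_dec a c) as [->|Hne]; [lra|].
  pose (prh := fun s (P : a < s < c) =>
    exist (fun l => derivable_pt_abs h s l) (dh s) (proj1 (Hder s P))).
  pose (prid := fun s (_ : a < s < c) => derivable_pt_id s).
  destruct (MVT h id a c prh prid ltac:(lra) Hcont
              (fun s _ => derivable_continuous_pt id s (derivable_pt_id s))) as [s [P E]].
  rewrite (derive_pt_eq_0 h s (dh s) (prh s P) (proj1 (Hder s P))),
          (derive_pt_eq_0 id s 1 (prid s P) (derivable_pt_lim_id s)) in E.
  unfold id in E. destruct (Hder s P) as [_ Hpos]. nra.
Qed.

(* Finitely many exceptional points are handled by splitting [a, c] at each of them. *)
Lemma nondecreasing_of_derive_nonneg_except (h dh : R -> R) (pts : list R) a c : a <= c ->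
  (forall s, a <= s <= c -> continuity_pt h s) ->
  (forall s, a < s < c -> ~ In s pts -> derivable_pt_lim h s (dh s) /\ 0 <= dh s) ->
  h a <= h c.
Proof.
  revert a c. induction pts as [|p pts IH]; intros a c Hac Hcont Hder.
  - apply (nondecreasing_of_derive_nonneg h dh); auto.
  - assert (Hder' : forall a' c', a <= a' -> c' <= c -> (a' < p < c' -> False) ->
              forall s, a' < s < c' -> ~ In s pts -> derivable_pt_lim h s (dh s) /\ 0 <= dh s).
    { intros a' c' H1 H2 Hp s Hs Hn. apply Hder; [lra|].
      intros [E|E]; [subst; lra|tauto]. }
    destruct (Rlt_dec a p) as [Hap|Hap]; [destruct (Rlt_dec p c) as [Hpc|Hpc]|].
    + apply Rle_trans with (h p).
      * apply IH; [lra| intros; apply Hcont; lra| apply (Hder' a p); lra].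
      * apply IH; [lra| intros; apply Hcont; lra| apply (Hder' p c); lra].
    + apply IH; [lra| exact Hcont| apply (Hder' a c); lra].
    + apply IH; [lra| exact Hcont| apply (Hder' a c); lra].
Qed.

Lemma constant_of_derive_zero (h : R -> R) a c : a <= c ->
  (forall s, derivable_pt_lim h s 0) -> h a = h c.
Proof.
  intros Hac Hder.
  assert (Hcont : forall s, continuity_pt h s)
    by (intro s; exact (derivable_continuous_pt h s (exist _ 0 (Hder s)))).
  apply Rle_antisym.
  - apply (nondecreasing_of_derive_nonneg h (fun _ => 0)); auto.
    intros s _; split; [apply Hder|lra].
  - enough (- h a <= - h c) by lra.
    apply (nondecreasing_of_derive_nonneg (fun s => - h s) (fun _ => 0)); auto.
    + intros s _; exact (continuity_pt_opp h s (Hcont s)).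
    + intros s _; split; [|lra].
      apply (derivable_pt_lim_rew _ s (- 0)); [exact (derivable_pt_lim_opp h s 0 (Hder s))|ring].
Qed.

Lemma linear_ode_solution (f : R -> R) k :
  (forall s, derivable_pt_lim f s (k * f s)) ->
  forall t, 0 <= t -> f t = f 0 * exp (k * t).
Proof.
  intros Hder t Ht.
  assert (E : f 0 * exp (- k * 0) = f t * exp (- k * t)).
  { apply (constant_of_derive_zero (fun s => f s * exp (- k * s))); [exact Ht|].
    intro s. eapply derivable_pt_lim_rew; [apply derivable_pt_lim_mult_exp, Hder|ring]. }
  rewrite Rmult_0_r, exp_0, Rmult_1_r in E.
  rewrite E, Rmult_assoc, <- exp_plus.
  replace (- k * t + k * t) with 0 by ring. rewrite exp_0. ring.
Qed.

Lemma m_mul_denom alpha b u : u * alpha - b <> 0 -> m_ alpha b u * (u * alpha - b) = u.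
Proof. intro Hu. unfold m_. field. exact Hu. Qed.

Lemma m_sub_eq_scaled alpha b u v : b < 0 -> u * alpha - b > 0 -> v * alpha - b > 0 ->
  exists K, K > 0 /\ m_ alpha b v - m_ alpha b u = (v - u) * K.
Proof.
  intros Hb Hu Hv. exists (- b / ((u * alpha - b) * (v * alpha - b))). split.
  - apply Rdiv_lt_0_compat; [lra| apply Rmult_lt_0_compat; lra].
  - unfold m_. field. lra.
Qed.

Lemma m_le_iff alpha b u v : b < 0 -> u * alpha - b > 0 -> v * alpha - b > 0 ->
  (m_ alpha b u <= m_ alpha b v <-> u <= v).
Proof. intros Hb Hu Hv. destruct (m_sub_eq_scaled alpha b u v Hb Hu Hv) as [K [HK E]]. split; nra. Qed.

Lemma m_lt_iff alpha b u v : b < 0 -> u * alpha - b > 0 -> v * alpha - b > 0 ->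
  (m_ alpha b u < m_ alpha b v <-> u < v).
Proof. intros Hb Hu Hv. destruct (m_sub_eq_scaled alpha b u v Hb Hu Hv) as [K [HK E]]. split; nra. Qed.

Lemma one_sub_m_mul_pos alpha b u : b < 0 -> u * alpha - b > 0 -> 1 - m_ alpha b u * alpha > 0.
Proof.
  intros Hb Hu. replace (1 - m_ alpha b u * alpha) with (- b / (u * alpha - b)).
  - apply Rdiv_lt_0_compat; lra.
  - unfold m_. field. lra.
Qed.

Lemma m_surjective alpha b c : b < 0 -> 1 - c * alpha > 0 ->
  exists u, u * alpha - b > 0 /\ m_ alpha b u = c.
Proof.
  intros Hb Hc. exists (- c * b / (1 - c * alpha)).
  assert (Hu : - c * b / (1 - c * alpha) * alpha - b = - b / (1 - c * alpha)) by (field; lra).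
  split.
  - rewrite Hu. apply Rdiv_lt_0_compat; lra.
  - unfold m_. rewrite Hu. field. lra.
Qed.

Lemma Cset_iff uL uU alpha b x y : uL < 0 -> 0 < uU -> b < 0 ->
  Cset uL uU alpha b x y <->
  0 < x /\ (uL * alpha - b > 0 -> m_ alpha b uL * x <= y)
        /\ (uU * alpha - b > 0 -> y <= m_ alpha b uU * x).
Proof.
  intros HuL HuU Hb. split.
  - intros [u [[[H1 H2] Hu] [Hx ->]]]. unfold inG in Hx.
    split; [exact Hx|]. split; intro; apply Rmult_le_compat_r; try lra; apply m_le_iff; auto.
  - intros [Hx [HL HU]].
    set (c := y / x).
    assert (Hy : y = c * x) by (unfold c; field; lra).
    assert (Hc : 1 - c * alpha > 0).
    { destruct (Rlt_dec 0 alpha) as [Ha|Ha].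
      - assert (P : uU * alpha - b > 0) by nra.
        pose proof (one_sub_m_mul_pos alpha b uU Hb P).
        assert (c <= m_ alpha b uU) by (specialize (HU P); nra). nra.
      - assert (P : uL * alpha - b > 0) by nra.
        pose proof (one_sub_m_mul_pos alpha b uL Hb P).
        assert (m_ alpha b uL <= c) by (specialize (HL P); nra). nra. }
    destruct (m_surjective alpha b c Hb Hc) as [u [Hu Hm]].
    exists u. split; [split; [split|exact Hu]|split; [exact Hx|rewrite Hm; exact Hy]].
    + destruct (Rlt_dec 0 (uL * alpha - b)) as [P|P].
      * apply (m_le_iff alpha b uL u Hb P Hu). rewrite Hm. specialize (HL P). nra.
      * nra.
    + destruct (Rlt_dec 0 (uU * alpha - b)) as [P|P].
      * apply (m_le_iff alpha b u uU Hb Hu P). rewrite Hm. specialize (HU P). nra.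
      * nra.
Qed.

Lemma endpoints_in_B_of_nonresonant uL uU alpha b : uL < 0 -> 0 < uU -> b < 0 ->
  ~ (exists u, inOmega uL uU u /\ b = alpha * u) ->
  uL * alpha - b > 0 /\ uU * alpha - b > 0.
Proof.
  intros HuL HuU Hb Hno.
  destruct (Req_dec alpha 0) as [->|Ha]; [lra|].
  assert (E : b / alpha * alpha = b) by (field; exact Ha).
  assert (Hout : ~ (uL <= b / alpha <= uU)).
  { intro HO. apply Hno. exists (b / alpha). split; [exact HO|lra]. }
  destruct (Rlt_dec 0 alpha) as [Hpos|Hneg]; split.
  - destruct (Rlt_dec 0 (uL * alpha - b)); [assumption|].
    exfalso; apply Hout; split; nra.
  - nra.
  - nra.
  - destruct (Rlt_dec 0 (uU * alpha - b)); [assumption|].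
    exfalso; apply Hout; split; nra.
Qed.

Lemma const_control_closed_form alpha b v (X Y : R -> R) : v * alpha - b <> 0 ->
  (forall s, derivable_pt_lim X s (v * alpha * X s) /\
             derivable_pt_lim Y s (b * Y s + v * X s)) ->
  forall t, 0 <= t ->
    X t = X 0 * exp (v * alpha * t) /\
    Y t - m_ alpha b v * X t = (Y 0 - m_ alpha b v * X 0) * exp (b * t).
Proof.
  intros Hk Hder t Ht. split.
  - apply (linear_ode_solution X); [intro s; apply Hder|exact Ht].
  - apply (linear_ode_solution (fun s => Y s - m_ alpha b v * X s)); [|exact Ht].
    intro s. destruct (Hder s) as [HX HY].
    eapply derivable_pt_lim_rew; [exact (derivable_pt_lim_sub_scal _ _ _ s _ _ HY HX)|].
    replace (v * X s) with (m_ alpha b v * (v * alpha - b) * X s)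
      by (rewrite m_mul_denom; [ring|exact Hk]).
    ring.
Qed.

Lemma const_control_solution alpha b v x y : v * alpha - b <> 0 ->
  is_solution alpha b (fun _ => v)
    (fun s => x * exp (v * alpha * s))
    (fun s => m_ alpha b v * (x * exp (v * alpha * s)) + (y - m_ alpha b v * x) * exp (b * s)).
Proof.
  intro Hk.
  set (X := fun s => x * exp (v * alpha * s)).
  assert (HX : forall s, derivable_pt_lim X s (v * alpha * X s)).
  { intro s. eapply derivable_pt_lim_rew;
      [exact (derivable_pt_lim_scal _ x s _ (derivable_pt_lim_exp_scal (v * alpha) s))|].
    unfold X. ring. }
  set (Y := fun s => m_ alpha b v * X s + (y - m_ alpha b v * x) * exp (b * s)).
  assert (HY : forall s, derivable_pt_lim Y s (b * Y s + v * X s)).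
  { intro s. eapply derivable_pt_lim_rew;
      [exact (derivable_pt_lim_plus _ _ s _ _ (derivable_pt_lim_scal _ (m_ alpha b v) s _ (HX s))
                (derivable_pt_lim_scal _ (y - m_ alpha b v * x) s _ (derivable_pt_lim_exp_scal b s)))|].
    replace (v * X s) with (m_ alpha b v * (v * alpha - b) * X s)
      by (rewrite m_mul_denom; [ring|exact Hk]).
    unfold Y, mult_real_fct. ring. }
  split.
  - intro s. split; eapply derivable_continuous_pt, exist; [exact (HX s)|exact (HY s)].
  - intros s _. exact (conj (HX s) (HY s)).
Qed.

(* Along a constant control [v] the slope [Y/X] tends to [m_v] geometrically at rate
   [exp ((b - v alpha) t)]; [transfer_time] is when the gap to [m_v] shrinks by [r]. *)
Definition transfer_time alpha b v r : R := - ln r / (v * alpha - b).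

Lemma transfer_time_pos alpha b v r : v * alpha - b > 0 -> 0 < r < 1 ->
  transfer_time alpha b v r > 0.
Proof.
  intros Hk Hr. apply Rdiv_lt_0_compat; [|exact Hk].
  enough (ln r < 0) by lra. rewrite <- ln_1. apply ln_increasing; lra.
Qed.

Lemma exp_transfer_time alpha b v r : v * alpha - b > 0 -> 0 < r ->
  exp (b * transfer_time alpha b v r) = exp (v * alpha * transfer_time alpha b v r) * r.
Proof.
  intros Hk Hr. rewrite <- (exp_ln r) at 3 by exact Hr. rewrite <- exp_plus.
  f_equal. unfold transfer_time. field. lra.
Qed.

Lemma const_control_slope_transfer alpha b v m1 m2 r (X Y : R -> R) :
  v * alpha - b > 0 -> 0 < r -> m2 - m_ alpha b v = r * (m1 - m_ alpha b v) ->
  (forall s, derivable_pt_lim X s (v * alpha * X s) /\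
             derivable_pt_lim Y s (b * Y s + v * X s)) ->
  0 <= transfer_time alpha b v r -> Y 0 = m1 * X 0 ->
  Y (transfer_time alpha b v r) = m2 * X (transfer_time alpha b v r).
Proof.
  intros Hk Hr Hm Hder Ht0 HY0.
  destruct (const_control_closed_form alpha b v X Y ltac:(lra) Hder _ Ht0) as [EX EY].
  rewrite exp_transfer_time, HY0 in EY by assumption.
  enough (Y (transfer_time alpha b v r) - m_ alpha b v * X (transfer_time alpha b v r)
          = (m2 - m_ alpha b v) * X (transfer_time alpha b v r)) by lra.
  rewrite EY, EX, Hm. ring.
Qed.

Lemma inIntB_inB uL uU alpha b u : inIntB uL uU alpha b u -> inB uL uU alpha b u.
Proof. intros [e [He HB]]. apply HB. rewrite Rminus_diag, Rabs_R0. exact He. Qed.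

(* Pushing [u2] slightly away from [u1] inside B puts [m_u2] strictly between [m_u1] and [m_v]. *)
Lemma exists_control_beyond uL uU alpha b u1 u2 : b < 0 ->
  inB uL uU alpha b u1 -> inIntB uL uU alpha b u2 -> u1 <> u2 ->
  exists v r, inB uL uU alpha b v /\ 0 < r < 1 /\
    m_ alpha b u2 - m_ alpha b v = r * (m_ alpha b u1 - m_ alpha b v).
Proof.
  intros Hb [_ K1] [e [He HB]] Hne.
  assert (K2 : u2 * alpha - b > 0) by (apply HB; rewrite Rminus_diag, Rabs_R0; exact He).
  set (v := if Rlt_dec u1 u2 then u2 + e / 2 else u2 - e / 2).
  assert (Bv : inB uL uU alpha b v).
  { apply HB. unfold v. destruct (Rlt_dec u1 u2).
    - replace (u2 + e / 2 - u2) with (e / 2) by ring. rewrite Rabs_right; lra.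
    - replace (u2 - e / 2 - u2) with (- (e / 2)) by ring. rewrite Rabs_Ropp, Rabs_right; lra. }
  exists v, ((m_ alpha b u2 - m_ alpha b v) / (m_ alpha b u1 - m_ alpha b v)).
  split; [exact Bv|]. destruct Bv as [_ Kv].
  assert (Hord : u1 < u2 < v \/ v < u2 < u1) by (unfold v; destruct (Rlt_dec u1 u2); lra).
  assert (Hm : m_ alpha b u1 < m_ alpha b u2 < m_ alpha b v \/
               m_ alpha b v < m_ alpha b u2 < m_ alpha b u1)
    by (rewrite !m_lt_iff by assumption; exact Hord).
  set (r := (m_ alpha b u2 - m_ alpha b v) / (m_ alpha b u1 - m_ alpha b v)).
  assert (E : m_ alpha b u2 - m_ alpha b v = r * (m_ alpha b u1 - m_ alpha b v))
    by (unfold r; field; lra).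
  split; [destruct Hm; split; nra|exact E].
Qed.

Lemma ray_transfer uL uU alpha b u1 u2 : b < 0 ->
  inIntB uL uU alpha b u1 -> inIntB uL uU alpha b u2 -> u1 <> u2 ->
  exists t0 u, t0 > 0 /\ inOmega uL uU u /\
    (forall x y X Y, ray alpha b u1 x y ->
       is_solution alpha b (fun _ => u) X Y -> X 0 = x -> Y 0 = y ->
       ray alpha b u2 (X t0) (Y t0)) /\
    (forall x' y', ray alpha b u2 x' y' ->
       exists x y X Y, ray alpha b u1 x y /\
         is_solution alpha b (fun _ => u) X Y /\ X 0 = x /\ Y 0 = y /\
         X t0 = x' /\ Y t0 = y').
Proof.
  intros Hb H1 H2 Hne.
  destruct (exists_control_beyond uL uU alpha b u1 u2 Hb (inIntB_inB _ _ _ _ _ H1) H2 Hne)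
    as [v [r [[Ov Kv] [Hr Hm]]]].
  set (t0 := transfer_time alpha b v r).
  assert (Ht0 : t0 > 0) by (apply transfer_time_pos; assumption).
  assert (Hforward : forall X Y, is_solution alpha b (fun _ => v) X Y ->
            0 < X 0 -> Y 0 = m_ alpha b u1 * X 0 -> ray alpha b u2 (X t0) (Y t0)).
  { intros X Y [_ Hder] HX0 HY0.
    assert (HderX : forall s, derivable_pt_lim X s (v * alpha * X s) /\
                              derivable_pt_lim Y s (b * Y s + v * X s))
      by (intro s; apply Hder; exists 1; split; [lra|reflexivity]).
    split.
    - destruct (const_control_closed_form alpha b v X Y ltac:(lra) HderX t0 ltac:(lra)) as [EX _].
      rewrite EX. apply Rmult_lt_0_compat; [exact HX0|apply exp_pos].
    - apply (const_control_slope_transfer alpha b v (m_ alpha b u1) _ r X Y Kv); [lra|exact Hm|exact HderX| |exact HY0].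
      left; exact Ht0. }
  exists t0, v. split; [exact Ht0|]. split; [exact Ov|]. split.
  - intros x y X Y [Hx Hy] Hsol <- <-. exact (Hforward X Y Hsol Hx Hy).
  - intros x' y' [Hx' Hy']. unfold inG in Hx'.
    set (x := x' * exp (- (v * alpha) * t0)).
    set (y := m_ alpha b u1 * x).
    set (X := fun s => x * exp (v * alpha * s)).
    set (Y := fun s => m_ alpha b v * X s + (y - m_ alpha b v * x) * exp (b * s)).
    assert (Hsol : is_solution alpha b (fun _ => v) X Y) by (apply const_control_solution; lra).
    assert (Hx : 0 < x) by (apply Rmult_lt_0_compat; [exact Hx'|apply exp_pos]).
    assert (HX0 : X 0 = x) by (unfold X; rewrite Rmult_0_r, exp_0; ring).
    assert (HY0 : Y 0 = y) by (unfold Y; rewrite HX0, Rmult_0_r, exp_0; ring).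
    assert (HXt0 : X t0 = x').
    { unfold X, x. rewrite Rmult_assoc, <- exp_plus.
      replace (- (v * alpha) * t0 + v * alpha * t0) with 0 by ring. rewrite exp_0. ring. }
    destruct (Hforward X Y Hsol) as [_ HYt0]; [lra|rewrite HX0, HY0; reflexivity|].
    exists x, y, X, Y. split; [split; [exact Hx|reflexivity]|].
    do 4 (split; [assumption|]). rewrite HYt0, HXt0, Hy'. reflexivity.
Qed.
Lemma exists_pos_dist_to_list (l : list R) s : ~ In s l ->
  exists d, d > 0 /\ forall p, In p l -> d <= Rabs (p - s).
Proof.
  induction l as [|q l IH]; intro Hn.
  - exists 1. split; [lra|intros p []].
  - destruct IH as [d [Hd Hl]]; [intro; apply Hn; right; assumption|].
    assert (Hq : Rabs (q - s) > 0) by (apply Rabs_pos_lt; intro E; apply Hn; left; lra).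
    exists (Rmin d (Rabs (q - s))). split; [apply Rmin_glb_lt; lra|].
    intros p [<-|Hp]; [apply Rmin_r|].
    apply Rle_trans with d; [apply Rmin_l|exact (Hl p Hp)].
Qed.

Lemma piecewise_const_locally_const (u : R -> R) t pts :
  (forall s1 s2, 0 <= s1 -> s1 <= s2 -> s2 <= t ->
     (forall p, In p pts -> ~ (s1 <= p <= s2)) -> u s1 = u s2) ->
  forall s, 0 < s < t -> ~ In s pts ->
  exists d, d > 0 /\ forall s', Rabs (s' - s) < d -> u s' = u s.
Proof.
  intros Hpc s Hs Hn.
  destruct (exists_pos_dist_to_list pts s Hn) as [d0 [Hd0 Hl]].
  exists (Rmin d0 (Rmin s (t - s))). split; [apply Rmin_glb_lt; [lra|apply Rmin_glb_lt; lra]|].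
  intros s' Hs'.
  assert (Hd : Rabs (s' - s) < d0 /\ Rabs (s' - s) < s /\ Rabs (s' - s) < t - s).
  { pose proof (Rmin_l d0 (Rmin s (t - s))). pose proof (Rmin_r d0 (Rmin s (t - s))).
    pose proof (Rmin_l s (t - s)). pose proof (Rmin_r s (t - s)). lra. }
  assert (Hgap : forall p, In p pts -> Rabs (s' - s) < Rabs (p - s))
    by (intros p Hp; specialize (Hl p Hp); lra).
  unfold Rabs in Hd, Hgap.
  destruct (Rle_dec s' s); [|symmetry]; apply Hpc;
    try (destruct (Rcase_abs (s' - s)); lra);
    intros p Hp Hin; specialize (Hgap p Hp);
    destruct (Rcase_abs (s' - s)), (Rcase_abs (p - s)); lra.
Qed.

Section SolutionOnInterval.

Variables (alpha b t : R) (u X Y : R -> R) (pts : list R).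
Hypothesis HX_cont : forall s, continuity_pt X s.
Hypothesis HY_cont : forall s, continuity_pt Y s.
Hypothesis Hode : forall s, 0 < s < t -> ~ In s pts ->
  derivable_pt_lim X s (u s * alpha * X s) /\ derivable_pt_lim Y s (b * Y s + u s * X s).

Variable M : R.
Hypothesis Hbound : forall s, - M <= u s * alpha.

(* [X^2 exp (2 M s)] is nondecreasing, so [X] cannot reach [0]. *)
Lemma solution_X_nonzero : X 0 <> 0 -> forall s, 0 <= s <= t -> X s <> 0.
Proof.
  intros HX0 s Hs Hz.
  assert (Hsq : X 0 * X 0 * exp (2 * M * 0) <= X s * X s * exp (2 * M * s)).
  { apply (nondecreasing_of_derive_nonneg_except (fun r => X r * X r * exp (2 * M * r))
      (fun r => (2 * (u r * alpha * X r * X r) + 2 * M * (X r * X r)) * exp (2 * M * r)) pts);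
      [lra| |].
    - intros r _. apply continuity_pt_mult; [apply continuity_pt_mult; apply HX_cont|].
      apply continuity_pt_exp_scal.
    - intros r Hr Hn. destruct (Hode r ltac:(lra) Hn) as [DX _]. split.
      + eapply derivable_pt_lim_rew;
          [apply (derivable_pt_lim_mult_exp (fun r => X r * X r)), derivable_pt_lim_mult; exact DX|].
        ring.
      + apply Rmult_le_pos; [|left; apply exp_pos]. specialize (Hbound r). nra. }
  rewrite Rmult_0_r, exp_0, Rmult_1_r, Hz in Hsq.
  assert (0 < X 0 * X 0) by (apply Rsqr_pos_lt; exact HX0). nra.
Qed.

Lemma solution_X_pos : 0 < X 0 -> forall s, 0 <= s <= t -> 0 < X s.
Proof.
  intros HX0 s Hs.
  destruct (Rlt_dec 0 (X s)) as [Hpos|Hnpos]; [exact Hpos|exfalso].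
  assert (Hneg : X s < 0) by (pose proof (solution_X_nonzero ltac:(lra) s Hs); lra).
  destruct (IVT (fun z => - X z) 0 s) as [z [Hz Ez]];
    [intro z; apply continuity_pt_opp, HX_cont| destruct (Req_dec s 0); subst; lra | lra | lra |].
  exact (solution_X_nonzero ltac:(lra) z ltac:(lra) ltac:(lra)).
Qed.

(* [(Y - m_w X) exp (-b s)] has derivative [X (u - w) (1 - m_w alpha) exp (-b s)], whose sign
   is that of [u - w] while [X > 0]. *)
Lemma solution_ray_side_preserved w sigma : 0 <= t -> b < 0 -> w * alpha - b > 0 ->
  (forall s, 0 <= sigma * (u s - w)) -> (forall s, 0 <= s <= t -> 0 < X s) ->
  0 <= sigma * (Y 0 - m_ alpha b w * X 0) -> 0 <= sigma * (Y t - m_ alpha b w * X t).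
Proof.
  intros Ht Hb Hw Hsign HXpos H0.
  set (m := m_ alpha b w).
  assert (Hmw : m * (w * alpha - b) = w) by (apply m_mul_denom; lra).
  assert (Hone : 1 - m * alpha > 0) by (apply one_sub_m_mul_pos; assumption).
  assert (Hmono : sigma * ((Y 0 - m * X 0) * exp (- b * 0))
                  <= sigma * ((Y t - m * X t) * exp (- b * t))).
  { apply (nondecreasing_of_derive_nonneg_except
      (fun s => sigma * ((Y s - m * X s) * exp (- b * s)))
      (fun s => sigma * (X s * (u s - m * (u s * alpha - b))) * exp (- b * s)) pts 0 t Ht).
    - intros s _. apply continuity_pt_scal, continuity_pt_mult; [|apply continuity_pt_exp_scal].
      apply continuity_pt_minus; [apply HY_cont|apply continuity_pt_scal, HX_cont].
    - intros s Hs Hn. destruct (Hode s Hs Hn) as [DX DY]. split.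
      + eapply derivable_pt_lim_rew.
        * apply derivable_pt_lim_scal, derivable_pt_lim_mult_exp.
          exact (derivable_pt_lim_sub_scal _ _ m s _ _ DY DX).
        * cbv beta. ring.
      + apply Rmult_le_pos; [|left; apply exp_pos].
        replace (u s - m * (u s * alpha - b)) with ((u s - w) * (1 - m * alpha)) by lra.
        specialize (Hsign s). specialize (HXpos s ltac:(lra)).
        replace (sigma * (X s * ((u s - w) * (1 - m * alpha))))
          with (X s * (sigma * (u s - w)) * (1 - m * alpha)) by ring.
        apply Rmult_le_pos; [apply Rmult_le_pos|]; lra. }
  rewrite Rmult_0_r, exp_0, Rmult_1_r, <- Rmult_assoc in Hmono.
  apply (Rmult_le_reg_r (exp (- b * t))); [apply exp_pos|]. fold m in H0. lra.
Qed.

End SolutionOnInterval.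

Lemma Cset_positively_invariant uL uU alpha b u X Y : uL < 0 -> 0 < uU -> b < 0 ->
  admissible uL uU u -> is_solution alpha b u X Y ->
  Cset uL uU alpha b (X 0) (Y 0) ->
  forall t, t >= 0 -> Cset uL uU alpha b (X t) (Y t).
Proof.
  intros HuL HuU Hb [HOm Hpc] [Hcont Hder] HC0 t Ht.
  destruct (Req_dec t 0) as [->|Htn]; [exact HC0|].
  rewrite Cset_iff in HC0 |- * by assumption. destruct HC0 as [HX0 [HL HU]].
  destruct (Hpc 0 t ltac:(lra)) as [pts Hpts].
  assert (Hode : forall s, 0 < s < t -> ~ In s pts ->
     derivable_pt_lim X s (u s * alpha * X s) /\ derivable_pt_lim Y s (b * Y s + u s * X s))
    by (intros s Hs Hn; exact (Hder s (piecewise_const_locally_const u t pts Hpts s Hs Hn))).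
  assert (HXpos : forall s, 0 <= s <= t -> 0 < X s).
  { apply (solution_X_pos alpha b t u X Y pts (fun s => proj1 (Hcont s)) Hode
             ((Rabs uL + Rabs uU) * Rabs alpha)); [|exact HX0].
    intro s. destruct (HOm s) as [H1 H2].
    unfold Rabs; destruct (Rcase_abs uL), (Rcase_abs uU), (Rcase_abs alpha); nra. }
  assert (Hside := solution_ray_side_preserved alpha b t u X Y pts
                     (fun s => proj1 (Hcont s)) (fun s => proj2 (Hcont s)) Hode).
  split; [apply HXpos; lra|]. split.
  - intro P. enough (0 <= 1 * (Y t - m_ alpha b uL * X t)) by lra.
    apply Hside; [lra|exact Hb|exact P| |exact HXpos|].
    + intro s. destruct (HOm s). lra.
    + specialize (HL P). lra.
  - intro P. enough (0 <= -1 * (Y t - m_ alpha b uU * X t)) by lra.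
    apply Hside; [lra|exact Hb|exact P| |exact HXpos|].
    + intro s. destruct (HOm s). lra.
    + specialize (HU P). lra.
Qed.

Theorem mainTheorem9 (uL uU alpha b : R)
  (HuL : uL < 0) (HuU : 0 < uU) (Halpha : alpha <> 0) (Hb : b < 0) :
  ((~ exists u, inOmega uL uU u /\ b = alpha * u) ->
     forall x y, Cset uL uU alpha b x y <->
       (inG x y /\ m_ alpha b uL * x <= y /\ y <= m_ alpha b uU * x)) /\
  ((exists u, inOmega uL uU u /\ b = alpha * u) ->
     (alpha > 0 -> forall x y, Cset uL uU alpha b x y <->
        (inG x y /\ y <= m_ alpha b uU * x)) /\
     (alpha < 0 -> forall x y, Cset uL uU alpha b x y <->
        (inG x y /\ y >= m_ alpha b uL * x))) /\
  (forall u1 u2, inIntB uL uU alpha b u1 -> inIntB uL uU alpha b u2 -> u1 <> u2 ->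
     exists t0 u, t0 > 0 /\ inOmega uL uU u /\
       (forall x y X Y, ray alpha b u1 x y ->
          is_solution alpha b (fun _ => u) X Y -> X 0 = x -> Y 0 = y ->
          ray alpha b u2 (X t0) (Y t0)) /\
       (forall x' y', ray alpha b u2 x' y' ->
          exists x y X Y, ray alpha b u1 x y /\
            is_solution alpha b (fun _ => u) X Y /\ X 0 = x /\ Y 0 = y /\
            X t0 = x' /\ Y t0 = y')) /\
  (forall u X Y, admissible uL uU u -> is_solution alpha b u X Y ->
     Cset uL uU alpha b (X 0) (Y 0) ->
     forall t, t >= 0 -> Cset uL uU alpha b (X t) (Y t)).
Proof.
  split; [|split; [|split]].
  - intros Hno x y.
    destruct (endpoints_in_B_of_nonresonant uL uU alpha b HuL HuU Hb Hno) as [PL PU].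
    rewrite Cset_iff by assumption. unfold inG. tauto.
  - intros [u0 [[O1 O2] E]]. split; intros Ha x y; rewrite Cset_iff by assumption; unfold inG.
    + assert (PU : uU * alpha - b > 0) by nra. assert (PL : ~ uL * alpha - b > 0) by nra.
      tauto.
    + assert (PL : uL * alpha - b > 0) by nra. assert (PU : ~ uU * alpha - b > 0) by nra.
      split; [intros (Hx & HL & _); split; [exact Hx|apply Rle_ge; tauto]|].
      intros [Hx Hy]. split; [exact Hx|split; [intros _; apply Rge_le, Hy|tauto]].
  - intros u1 u2. exact (ray_transfer uL uU alpha b u1 u2 Hb).
  - intros u X Y. exact (Cset_positively_invariant uL uU alpha b u X Y HuL HuU Hb).
Qed.
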